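(* For all $0\le\lambda<1$ and $0\le d<1$ there is a number $g(\lambda,d)<1$, depending only on $\lambda$ and $d$, with the following property. Let $H$ be a finite-dimensional complex Hilbert space, $U:H\to H$ unitary and $A:H\to H$ Hermitian such that $1$ is an eigenvalue of $A$ and every other eigenvalue $\mu$ of $A$ satisfies $|\mu|\le\lambda$. Let $A_{\max}$ be the eigenspace of $A$ for the eigenvalue $1$ and $P_{\max}$ the orthogonal projection onto $A_{\max}$, and assume $\|P_{\max}Uv\|\le d\|v\|$ for all $v\in A_{\max}$. Then $\|(UA)^2v\|\le g(\lambda,d)\|v\|$ for all $v\in H$, and hence $\|(UA)^k\|_{op}\le g(\lambda,d)^{\lfloor k/2\rfloor}$ for all $k\ge0$.
   Context: $\|\cdot\|_{op}$ is the operator norm. *)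

From HB Require Import structures.
From mathcomp Require Import all_boot all_order all_algebra.
From mathcomp Require Import all_classical all_reals.
From mathcomp Require Import complex.
Set Implicit Arguments. Unset Strict Implicit. Unset Printing Implicit Defensive.
Import Order.TTheory GRing.Theory Num.Theory.
Local Open Scope ring_scope.
Local Open Scope classical_set_scope.

Section Hilbert.
Variable R : realType.
Local Notation C := R[i].

Definition cabs (z : C) : R := Normc.normc z.

Definition cconj (z : C) : C := (z ^*)%C.

(* H = C^n with the standard inner product <u,v> = sum_i conj(u_i) v_i *)
Definition dotc n (u v : 'cV[C]_n) : C := \sum_(i < n) cconj (u i 0) * v i 0.

Definition vnorm n (v : 'cV[C]_n) : R := Num.sqrt (\sum_(i < n) cabs (v i 0) ^+ 2).

Definition adj n (M : 'M[C]_n) : 'M[C]_n := (map_mx cconj M)^T.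

Definition unitaryC n (U : 'M[C]_n) : Prop := adj U *m U = 1%:M /\ U *m adj U = 1%:M.
Definition hermitianC n (A : 'M[C]_n) : Prop := adj A = A.

Definition is_eigenvalue n (A : 'M[C]_n) (mu : C) : Prop :=
  exists v : 'cV[C]_n, v != 0 /\ A *m v = mu *: v.

Definition eigenspace_c n (A : 'M[C]_n) (mu : C) : set 'cV[C]_n :=
  [set v | A *m v = mu *: v].

Definition orth_proj_onto n (P : 'M[C]_n) (S : set 'cV[C]_n) : Prop :=
  forall v : 'cV[C]_n, S (P *m v) /\ (forall w, S w -> dotc w (v - P *m v) = 0).

Definition opnorm n (M : 'M[C]_n) : R :=
  sup [set vnorm (M *m v) | v in [set v : 'cV[C]_n | vnorm v <= 1]].

Definition mxpow n (M : 'M[C]_n) (k : nat) : 'M[C]_n := iter k (mulmx M) 1%:M.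

End Hilbert.

(* Write v = p + r with p = P v in the 1-eigenspace and r orthogonal to it.
   The Hermitian A fixes p and shrinks r by lam, so |A v|^2 <= |p|^2 + lam^2 |r|^2.
   After one step of U A, either r carried a fixed fraction of the mass, and
   U A v is already shorter than v by a definite amount, or v was nearly in the
   eigenspace, and then U moves it mostly out of the eigenspace (|P U p| <= d |p|),
   so that the second application of A shrinks it by a definite amount.  Two
   steps thus always contract by a factor g < 1, while each single step is a
   contraction; this gives the bound g ^ (k/2) on the k-th power. *)

From HB Require Import structures.
From mathcomp Require Import all_boot all_order all_algebra.
From mathcomp Require Import all_classical all_reals.
From mathcomp Require Import complex spectral ring lra.
Import Order.TTheory GRing.Theory Num.Theory.
Local Open Scope ring_scope.
Local Open Scope sesquilinear_scope.
Set Implicit Arguments. Unset Strict Implicit. Unset Printing Implicit Defensive.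

Section Norms.
Variable R : realType.
Local Notation C := R[i].

Definition sqnorm n (v : 'cV[C]_n) : R := \sum_(i < n) cabs (v i 0) ^+ 2.

Lemma sqnorm_ge0 n (v : 'cV[C]_n) : 0 <= sqnorm v.
Proof. by apply: sumr_ge0 => i _; rewrite sqr_ge0. Qed.

Lemma vnorm0 n : vnorm (0 : 'cV[C]_n) = 0.
Proof.
rewrite /vnorm big1 ?sqrtr0 // => i _.
by rewrite mxE /cabs Normc.normc0 expr0n.
Qed.

Lemma vnorm_le n (u v : 'cV[C]_n) (c : R) : 0 <= c ->
  sqnorm u <= c * sqnorm v -> vnorm u <= Num.sqrt c * vnorm v.
Proof.
by move=> c_ge0 le_uv; rewrite /vnorm -sqrtrM // ler_sqrt // mulr_ge0 ?sqnorm_ge0.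
Qed.

Lemma adjE n (M : 'M[C]_n) : adj M = M ^t*.
Proof. by rewrite /adj map_trmx. Qed.

Lemma trmxC_mul m n p (M : 'M[C]_(m, n)) (N : 'M[C]_(n, p)) :
  (M *m N) ^t* = N ^t* *m M ^t*.
Proof. by rewrite -!map_trmx map_mxM trmx_mul. Qed.

Lemma trmxC_add m n (M N : 'M[C]_(m, n)) : (M + N) ^t* = M ^t* + N ^t*.
Proof. by rewrite -!map_trmx map_mxD linearD. Qed.

Lemma dotcE n (u v : 'cV[C]_n) : dotc u v = (u ^t* *m v) 0 0.
Proof. by rewrite /dotc !mxE; apply: eq_bigr => i _; rewrite !mxE. Qed.

Lemma dotcC n (u v : 'cV[C]_n) : dotc v u = (dotc u v)^*.
Proof.
rewrite /dotc rmorph_sum; apply: eq_bigr => i _.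
by rewrite rmorphM /= /cconj conjCK mulrC.
Qed.

Lemma dotcDl n (u v w : 'cV[C]_n) : dotc (v + w) u = dotc v u + dotc w u.
Proof. by rewrite !dotcE trmxC_add mulmxDl mxE. Qed.

Lemma dotcDr n (u v w : 'cV[C]_n) : dotc u (v + w) = dotc u v + dotc u w.
Proof. by rewrite !dotcE mulmxDr mxE. Qed.

Lemma sqnorm_dotc n (v : 'cV[C]_n) : (sqnorm v)%:C%C = dotc v v.
Proof.
rewrite /sqnorm /dotc rmorph_sum; apply: eq_bigr => i _.
by rewrite rmorphXn /= -[X in X ^+ 2]/(`|v i 0|) normCKC.
Qed.

Lemma sqnormD_orth n (u v : 'cV[C]_n) :
  dotc u v = 0 -> sqnorm (u + v) = sqnorm u + sqnorm v.
Proof.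
move=> uv0; apply: (@complexI R); rewrite rmorphD /= !sqnorm_dotc.
by rewrite dotcDl !dotcDr uv0 [dotc v u]dotcC uv0 conjC0 addr0 add0r.
Qed.

Lemma sqnorm_isometry n (Q : 'M[C]_n) (v : 'cV[C]_n) :
  Q ^t* *m Q = 1%:M -> sqnorm (Q *m v) = sqnorm v.
Proof.
move=> QtQ; apply: (@complexI R); rewrite !sqnorm_dotc !dotcE trmxC_mul.
by rewrite mulmxA -(mulmxA _ (Q ^t*)) QtQ mulmx1.
Qed.

Lemma dotc_hermitian n (A : 'M[C]_n) (u v : 'cV[C]_n) :
  A ^t* = A -> dotc (A *m u) v = dotc u (A *m v).
Proof. by move=> hermA; rewrite !dotcE trmxC_mul hermA mulmxA. Qed.

Lemma cabsD_sqr_le (e : R) (x y : C) : 0 < e ->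
  cabs (x + y) ^+ 2 <= (1 + e) * cabs x ^+ 2 + (1 + e^-1) * cabs y ^+ 2.
Proof.
have cabs_sqr (z : C) : cabs z ^+ 2 = complex.Re z ^+ 2 + complex.Im z ^+ 2.
  by case: z => a b; rewrite /cabs /Normc.normc /= sqr_sqrtr // addr_ge0 ?sqr_ge0.
move=> e_gt0; rewrite !cabs_sqr; case: x => a b; case: y => c d /=.
rewrite -subr_ge0.
have -> : (1 + e) * (a ^+ 2 + b ^+ 2) + (1 + e^-1) * (c ^+ 2 + d ^+ 2) -
    ((a + c) ^+ 2 + (b + d) ^+ 2) = e^-1 * ((e * a - c) ^+ 2 + (e * b - d) ^+ 2).
  by field; rewrite gt_eqF.
by rewrite mulr_ge0 ?addr_ge0 ?sqr_ge0 // invr_ge0 ltW.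
Qed.

Lemma sqnormD_le n (e : R) (u v : 'cV[C]_n) : 0 < e ->
  sqnorm (u + v) <= (1 + e) * sqnorm u + (1 + e^-1) * sqnorm v.
Proof.
move=> e_gt0; rewrite /sqnorm !mulr_sumr -big_split /=.
by apply: ler_sum => i _; rewrite mxE cabsD_sqr_le.
Qed.

Lemma opnorm_le n (M : 'M[C]_n) (c : R) : 0 <= c ->
  (forall v, vnorm (M *m v) <= c * vnorm v) -> opnorm M <= c.
Proof.
move=> c_ge0 leM; apply: ge_sup.
  by exists (vnorm (M *m 0)), 0; rewrite //= vnorm0 ler01.
move=> _ [v v_le1 <-]; apply: le_trans (leM v) _.
by rewrite ler_piMr.
Qed.

Lemma mxpow_vnorm_le n (M : 'M[C]_n) (g : R) : 0 <= g ->
  (forall v, vnorm (M *m v) <= vnorm v) ->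
  (forall v, vnorm (M *m (M *m v)) <= g * vnorm v) ->
  forall k v, vnorm (mxpow M k *m v) <= g ^+ k./2 * vnorm v.
Proof.
move=> g_ge0 leM leM2.
suff k_kS k : (forall v, vnorm (mxpow M k *m v) <= g ^+ k./2 * vnorm v) /\
              (forall v, vnorm (mxpow M k.+1 *m v) <= g ^+ k.+1./2 * vnorm v).
  by move=> k; case: (k_kS k).
elim: k => [|k [IHk IHkS]].
  by split=> v; rewrite /mxpow /= ?mulmx1 ?mul1mx expr0 mul1r.
split=> // v; rewrite [k.+2./2]/= exprS -mulrA.
have -> : mxpow M k.+2 *m v = M *m (M *m (mxpow M k *m v)) by rewrite /mxpow /= !mulmxA.
by apply: le_trans (leM2 _) _; rewrite ler_wpM2l.
Qed.

End Norms.

Section Spectral.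
Variables (R : realType) (n : nat) (A : 'M[R[i]]_n).
Hypothesis normalA : A \is normalmx.
Local Notation Q := (spectralmx A).
Local Notation D := (spectral_diag A).
Local Notation q j := (Q ^t* *m (delta_mx j 0 : 'cV[R[i]]_n)).

Lemma spectral_mulmx_trC : Q *m Q ^t* = 1%:M.
Proof. exact/unitarymxP/spectral_unitarymx. Qed.

Lemma spectral_trC_mulmx : Q ^t* *m Q = 1%:M.
Proof.
by rewrite -(invmx_unitary (spectral_unitarymx A)) mulVmx // spectral_unit.
Qed.

Lemma spectral_decomposition : A = Q ^t* *m diag_mx D *m Q.
Proof.
by rewrite -(invmx_unitary (spectral_unitarymx A)); apply/orthomx_spectralP.
Qed.

Lemma spectral_eigenvector j : A *m q j = D 0 j *: q j.
Proof.
rewrite {1}spectral_decomposition -!mulmxA (mulmxA Q) spectral_mulmx_trC.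
rewrite mul1mx scalemxAr.
congr (_ *m _); apply/matrixP => a b; rewrite mul_diag_mx !mxE.
by case: (a =P j) => [->|]; rewrite ?mulr1 ?mulr0.
Qed.

Lemma spectral_eigenvector_neq0 j : q j != 0.
Proof.
apply: contra_neq (@oner_neq0 R[i]) => qj0.
have /matrixP/(_ j 0) : Q *m q j = delta_mx j 0.
  by rewrite mulmxA spectral_mulmx_trC mul1mx.
by rewrite qj0 mulmx0 !mxE !eqxx.
Qed.

Lemma spectral_coord (r : 'cV[R[i]]_n) j : dotc (q j) r = (Q *m r) j 0.
Proof.
have trmxC_delta : (delta_mx j 0 : 'cV[R[i]]_n) ^t* = delta_mx 0 j.
  apply/matrixP => a b; rewrite !mxE.
  by case: (b == j); case: (a == 0); rewrite /= ?conjC1 ?conjC0.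
by rewrite dotcE trmxC_mul trmxCK trmxC_delta -mulmxA -rowE mxE.
Qed.

(* In the eigenbasis, A r has coordinates D_j <q_j, r>; those with D_j = 1 vanish. *)
Lemma sqnorm_orth_fixed_le (lam : R) : 0 <= lam ->
  (forall mu, is_eigenvalue A mu -> mu != 1 -> cabs mu <= lam) ->
  forall r, (forall w, A *m w = w -> dotc w r = 0) ->
  sqnorm (A *m r) <= lam ^+ 2 * sqnorm r.
Proof.
move=> lam_ge0 eig_le r r_orth.
rewrite {1}spectral_decomposition -!mulmxA.
rewrite sqnorm_isometry ?trmxCK ?spectral_mulmx_trC //.
rewrite -(sqnorm_isometry r spectral_trC_mulmx).
rewrite /sqnorm mulr_sumr; apply: ler_sum => j _.
rewrite mul_diag_mx mxE /cabs Normc.normcM -/(cabs _) -/(cabs _) exprMn.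
have [/eqP Dj1|Dj1] := boolP (D 0 j == 1).
  have : dotc (q j) r = 0 by rewrite r_orth // spectral_eigenvector Dj1 scale1r.
  by rewrite spectral_coord => ->; rewrite /cabs Normc.normc0 expr0n /= !mulr0.
have Dj_le : cabs (D 0 j) <= lam.
  apply: eig_le Dj1; exists (q j).
  by rewrite spectral_eigenvector_neq0 spectral_eigenvector.
rewrite ler_wpM2r ?sqr_ge0 // lerXn2r ?nnegrE //.
by case: (D 0 j) => a b; apply: sqrtr_ge0.
Qed.

End Spectral.

(* If q is below both a + L b and c a + K b, it is below h (a + b): split on
   whether b exceeds the fraction s = (1 - c) / (2 K) of a + b. *)
Lemma le_min_affine (R : realFieldType) (L c K a b q : R) :
  0 <= L <= 1 -> 0 <= c <= 1 -> 1 <= K -> 0 <= a -> 0 <= b ->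
  q <= a + L * b -> q <= c * a + K * b ->
  q <= (1 - (1 - L) * (1 - c) / (2 * K)) * (a + b).
Proof.
move=> /andP[L_ge0 L_le1] /andP[c_ge0 c_le1] K_ge1 a_ge0 b_ge0 le_q1 le_q2.
set s := (1 - c) / (2 * K).
have s_ge0 : 0 <= s by rewrite divr_ge0 ?subr_ge0 //; lra.
have Ks : K * s = (1 - c) / 2 by rewrite /s; field; lra.
have -> : (1 - L) * (1 - c) / (2 * K) = (1 - L) * s by rewrite /s mulrA.
have [b_ge|b_lt] := lerP (s * (a + b)) b.
  have : (1 - L) * (s * (a + b)) <= (1 - L) * b by rewrite ler_wpM2l ?subr_ge0.
  nra.
have : K * b <= K * (s * (a + b)) by rewrite ler_wpM2l ?ltW //; lra.
have : (1 - L) * s <= s by rewrite ler_piMl //; lra.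
have : s <= (1 - c) / 2 by rewrite -Ks ler_peMl.
nra.
Qed.

Definition two_step_rate (R : realFieldType) (L c K : R) : R :=
  1 - (1 - L) ^+ 2 * (1 - c) / (2 * K).

Lemma two_step_rate_ge0 (R : realFieldType) (L c K : R) :
  0 <= L <= 1 -> 0 <= c <= 1 -> 1 <= K -> 0 <= two_step_rate L c K.
Proof.
move=> /andP[L_ge0 L_le1] /andP[c_ge0 c_le1] K_ge1.
have : (1 - L) ^+ 2 * (1 - c) <= 1 by rewrite mulr_ile1 ?exprn_ile1 ?sqr_ge0; lra.
by rewrite subr_ge0 ler_pdivrMr; lra.
Qed.

Lemma two_step_rate_lt1 (R : realFieldType) (L c K : R) :
  L < 1 -> c < 1 -> 0 < K -> two_step_rate L c K < 1.
Proof.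
move=> L_lt1 c_lt1 K_gt0.
by rewrite gtrBl divr_gt0 ?mulr_gt0 ?exprn_gt0 ?subr_gt0.
Qed.

(* Applied with a, b the squared norms of v on and off the fixed space, y and q
   those of U A v and of its part on the fixed space, and t that of A U A v. *)
Lemma le_two_step_rate (R : realFieldType) (L c K a b y q t : R) :
  0 <= L <= 1 -> 0 <= c <= 1 -> 1 <= K -> 0 <= a -> 0 <= b ->
  y <= a + L * b -> q <= y -> q <= c * a + K * b -> t <= L * y + (1 - L) * q ->
  t <= two_step_rate L c K * (a + b).
Proof.
move=> L01 c01 K_ge1 a_ge0 b_ge0 le_y le_qy le_q le_t.
have := le_min_affine L01 c01 K_ge1 a_ge0 b_ge0 (le_trans le_qy le_y) le_q.
case/andP: L01 => L_ge0 L_le1; case/andP: c01 => c_ge0 c_le1.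
set h := 1 - _ => le_qh.
have -> : two_step_rate L c K = L + (1 - L) * h.
  by rewrite /two_step_rate /h; field; lra.
have : (1 - L) * q <= (1 - L) * (h * (a + b)) by rewrite ler_wpM2l ?subr_ge0.
have : L * y <= L * (a + b) by rewrite ler_wpM2l //; nra.
nra.
Qed.

Section FixedSpace.
Variables (R : realType) (n : nat) (A P : 'M[R[i]]_n) (lam : R).
Hypothesis hermA : A ^t* = A.
Hypothesis lam_ge0 : 0 <= lam.
Hypothesis eig_le : forall mu, is_eigenvalue A mu -> mu != 1 -> cabs mu <= lam.
Hypothesis projP : orth_proj_onto P (eigenspace_c A 1).
Implicit Types z w : 'cV[R[i]]_n.

Lemma proj_fixed z : A *m (P *m z) = P *m z.
Proof. by have [+ _] := projP z; rewrite /eigenspace_c /= scale1r. Qed.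

Lemma proj_orth_fixed z w : A *m w = w -> dotc w (z - P *m z) = 0.
Proof. by move=> Aw; apply: (projP z).2; rewrite /eigenspace_c /= scale1r. Qed.

Lemma sqnorm_proj_split z : sqnorm z = sqnorm (P *m z) + sqnorm (z - P *m z).
Proof.
rewrite -sqnormD_orth; first by rewrite addrC subrK.
exact/proj_orth_fixed/proj_fixed.
Qed.

Lemma sqnorm_proj_le z : sqnorm (P *m z) <= sqnorm z.
Proof. by rewrite [leRHS]sqnorm_proj_split lerDl sqnorm_ge0. Qed.

Lemma sqnorm_orth_proj_le z :
  sqnorm (A *m (z - P *m z)) <= lam ^+ 2 * sqnorm (z - P *m z).
Proof.
apply: sqnorm_orth_fixed_le => //; last exact: proj_orth_fixed.
by apply/normalmxP; rewrite hermA.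
Qed.

Lemma sqnorm_hermitian_le z :
  sqnorm (A *m z) <= sqnorm (P *m z) + lam ^+ 2 * sqnorm (z - P *m z).
Proof.
have -> : A *m z = P *m z + A *m (z - P *m z).
  by rewrite mulmxBr proj_fixed addrC subrK.
rewrite (sqnormD_orth (u := P *m z)) ?lerD2l ?sqnorm_orth_proj_le //.
by rewrite -dotc_hermitian // proj_fixed proj_orth_fixed ?proj_fixed.
Qed.

Variables (U : 'M[R[i]]_n) (d : R).
Hypothesis isoU : U ^t* *m U = 1%:M.
Hypothesis proj_U_le :
  forall v, eigenspace_c A 1 v -> vnorm (P *m (U *m v)) <= d * vnorm v.

Lemma sqnorm_proj_UA_le (e : R) : 0 <= d -> 0 < e -> forall v,
  sqnorm (P *m (U *m (A *m v))) <=
  (1 + e) * d ^+ 2 * sqnorm (P *m v) + (1 + e^-1) * (lam ^+ 2 * sqnorm (v - P *m v)).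
Proof.
move=> d_ge0 e_gt0 v; set p := P *m v; set r := v - p.
have -> : P *m (U *m (A *m v)) = P *m (U *m p) + P *m (U *m (A *m r)).
  by rewrite -!mulmxDr /r mulmxBr proj_fixed addrC subrK.
apply: le_trans (sqnormD_le _ _ e_gt0) _.
rewrite -mulrA; apply: lerD; apply: ler_wpM2l.
- by rewrite addr_ge0 // ltW.
- have : vnorm (P *m (U *m p)) <= d * vnorm p.
    by apply: proj_U_le; rewrite /eigenspace_c /= scale1r proj_fixed.
  rewrite /vnorm -[sqnorm p]sqr_sqrtr ?sqnorm_ge0 //.
  rewrite -[sqnorm (P *m _)]sqr_sqrtr ?sqnorm_ge0 // -exprMn => le_pU.
  by rewrite lerXn2r ?nnegrE ?mulr_ge0 ?sqrtr_ge0.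
- by rewrite addr_ge0 // invr_ge0 ltW.
- apply: le_trans (sqnorm_proj_le _) _.
  by rewrite sqnorm_isometry // sqnorm_orth_proj_le.
Qed.

Lemma sqnorm_UA_le : lam <= 1 -> forall v, sqnorm (U *m (A *m v)) <= sqnorm v.
Proof.
move=> lam_le1 v; rewrite sqnorm_isometry // [leRHS]sqnorm_proj_split.
apply: le_trans (sqnorm_hermitian_le v) _.
by rewrite lerD2l ler_piMl ?sqnorm_ge0 ?exprn_ile1.
Qed.

Lemma sqnorm_UA2_le (e : R) : lam <= 1 -> 0 <= d -> 0 < e -> (1 + e) * d ^+ 2 <= 1 ->
  forall v, sqnorm (U *m (A *m (U *m (A *m v)))) <=
    two_step_rate (lam ^+ 2) ((1 + e) * d ^+ 2) (1 + e^-1) * sqnorm v.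
Proof.
move=> lam_le1 d_ge0 e_gt0 c_le1 v.
rewrite sqnorm_isometry // [sqnorm v]sqnorm_proj_split.
have L01 : 0 <= lam ^+ 2 <= 1 by rewrite sqr_ge0 exprn_ile1.
have c01 : 0 <= (1 + e) * d ^+ 2 <= 1 by rewrite c_le1 mulr_ge0 ?sqr_ge0 ?addr_ge0 ?ltW.
have K_ge1 : 1 <= 1 + e^-1 by rewrite lerDl invr_ge0 ltW.
set y := U *m (A *m v).
apply: le_two_step_rate L01 c01 K_ge1 (sqnorm_ge0 _) (sqnorm_ge0 _) _
  (sqnorm_proj_le y) _ _.
- by rewrite /y sqnorm_isometry //; apply: sqnorm_hermitian_le.
- apply: le_trans (sqnorm_proj_UA_le d_ge0 e_gt0 v) _.
  by rewrite lerD2l ler_pM2l ?ler_piMl ?sqnorm_ge0 ?exprn_ile1 ?addr_gt0 ?invr_gt0.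
- have split_y : sqnorm y - sqnorm (P *m y) = sqnorm (y - P *m y).
    by rewrite [sqnorm y]sqnorm_proj_split addrAC subrr add0r.
  have -> : lam ^+ 2 * sqnorm y + (1 - lam ^+ 2) * sqnorm (P *m y) =
            sqnorm (P *m y) + lam ^+ 2 * (sqnorm y - sqnorm (P *m y)) by ring.
  by rewrite split_y sqnorm_hermitian_le.
Qed.

End FixedSpace.

Theorem mainTheorem9 (R : realType) (lam d : R) (hlam0 : 0 <= lam) (hlam1 : lam < 1)
    (hd0 : 0 <= d) (hd1 : d < 1) :
  exists g : R, g < 1 /\
  forall (n : nat) (U A P : 'M[R[i]]_n),
    unitaryC U -> hermitianC A ->
    is_eigenvalue A 1 ->
    (forall mu : R[i], is_eigenvalue A mu -> mu != 1 -> cabs mu <= lam) ->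
    orth_proj_onto P (eigenspace_c A 1) ->
    (forall v, eigenspace_c A 1 v -> vnorm (P *m (U *m v)) <= d * vnorm v) ->
    (forall v : 'cV[R[i]]_n, vnorm (mxpow (U *m A) 2 *m v) <= g * vnorm v) /\
    (forall k : nat, opnorm (mxpow (U *m A) k) <= g ^+ (k./2)).
Proof.
pose e := (1 - d ^+ 2) / 2; pose c := (1 + e) * d ^+ 2.
pose rate := two_step_rate (lam ^+ 2) c (1 + e^-1).
have lam_le1 := ltW hlam1.
have e_gt0 : 0 < e by rewrite divr_gt0 ?subr_gt0 ?expr_lt1.
have c_lt1 : c < 1.
  have : d ^+ 2 < 1 by rewrite expr_lt1.
  have : 0 <= d ^+ 2 := sqr_ge0 d.
  rewrite /c /e; nra.
have rate_ge0 : 0 <= rate.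
  apply: two_step_rate_ge0; last by rewrite lerDl invr_ge0 ltW.
    by rewrite sqr_ge0 exprn_ile1.
  by rewrite (ltW c_lt1) andbT /c mulr_ge0 ?sqr_ge0 // addr_ge0 // ltW.
exists (Num.sqrt rate); split.
  by rewrite -sqrtr1 ltr_sqrt ?ltr01 ?two_step_rate_lt1 ?expr_lt1 ?addr_gt0 ?invr_gt0.
move=> n U A P [+ _] + _ eig_le projP proj_U_le.
rewrite /hermitianC !adjE => isoU hermA.
have step1 v : vnorm (U *m A *m v) <= vnorm v.
  rewrite -mulmxA -[vnorm v]mul1r -sqrtr1 vnorm_le ?ler01 // mul1r.
  exact: (sqnorm_UA_le hermA hlam0 eig_le projP (U := U)).
have step2 v : vnorm (U *m A *m (U *m A *m v)) <= Num.sqrt rate * vnorm v.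
  rewrite -!mulmxA vnorm_le //.
  exact: (sqnorm_UA2_le hermA hlam0 eig_le projP (U := U) isoU proj_U_le
    lam_le1 hd0 e_gt0 (ltW c_lt1)).
split=> [v|k]; first by rewrite /mxpow /= mulmx1 -mulmxA; apply: step2.
apply: opnorm_le; first by rewrite exprn_ge0 ?sqrtr_ge0.
by apply: mxpow_vnorm_le; rewrite ?sqrtr_ge0.
Qed.
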